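(* Let $k\ge3$, and let $\mathcal P=\{p_1,\dots,p_{k^2}\}$ be a family of real polynomials in the commuting variables $x_1,\dots,x_{2k^2}$ admitting an nc representation $p(X,Y)$ of degree $d>1$. Let $t\ge2$ and $s\in\{t,t+1\}$, and let $e\ne0$. Suppose that, counting over all polynomials of the family, there are exactly $k$ terms $e\,x_{i_1}^sx_{j_1}^t,\dots,e\,x_{i_k}^sx_{j_k}^t$ with $x_{i_n}\ne x_{j_n}$ (i.e. exactly $k$ two letter terms with coefficient $e$ whose exponents are $s$ and $t$). Then for each $n$, one of $x_{i_n},x_{j_n}$ is a diagonal entry of $X$ and the other is the diagonal entry of $Y$ in the same position; and if $p_{\ell_n}$ is the polynomial containing $e\,x_{i_n}^sx_{j_n}^t$, then $p_{\ell_n}$ occupies that same diagonal position in the array $p(X,Y)$.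
   Context: The family $\mathcal P$ admits an nc representation $p(X,Y)$ if there are $k\times k$ matrices $X,Y$ whose $2k^2$ entries are the variables $x_1,\dots,x_{2k^2}$, each used exactly once, and a noncommutative polynomial $p$ in two letters with real coefficients such that the matrix $p(X,Y)$ is a $k\times k$ array whose entries are $p_1,\dots,p_{k^2}$, each exactly once. A ''term'' means a monomial with its nonzero coefficient after collecting like terms. *)

From HB Require Import structures.
From mathcomp Require Import all_boot all_order all_algebra.
From mathcomp Require Import finmap.
From mathcomp Require Import mpoly.
From mathcomp Require Import Rstruct.
From Stdlib Require Rdefinitions.

Set Implicit Arguments.
Unset Strict Implicit.
Unset Printing Implicit Defensive.

Import Order.TTheory GRing.Theory Num.Theory.
Local Open Scope ring_scope.
Local Open Scope fset_scope.

Notation real := Rdefinitions.R.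

(* A noncommutative polynomial in two letters X (= false) and Y (= true)
   with real coefficients: a finitely supported map from words to reals. *)
Definition ncpoly := {fsfun seq bool -> real with 0%R}.

Definition ncdeg (p : ncpoly) : nat := (\max_(w <- finsupp p) size w)%N.

Notation cpoly N := {mpoly real[N]}.

Definition word_eval N k (X Y : 'M[cpoly N]_k) (w : seq bool) : 'M[cpoly N]_k :=
  foldr (fun (b : bool) M => (if b then Y else X) *m M) 1%:M w.

Definition nc_eval N k (p : ncpoly) (X Y : 'M[cpoly N]_k) : 'M[cpoly N]_k :=
  \sum_(w <- finsupp p) (p w)%:MP *: word_eval X Y w.

(* The matrix of variables: position (b, i, j) is entry (i, j) of X if b = false,
   of Y if b = true; pos gives the index of the variable placed there. *)
Definition var_mx N k (pos : bool * 'I_k * 'I_k -> 'I_N) (b : bool) : 'M[cpoly N]_k :=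
  \matrix_(i, j) 'X_(pos (b, i, j)).

Definition mon2 N (i j : 'I_N) (s t : nat) : 'X_{1..N} :=
  (U_(i) *+ s + U_(j) *+ t)%MM.

Definition two_letter N (s t : nat) (m : 'X_{1..N}) : Prop :=
  exists i j : 'I_N, i != j /\ m = mon2 i j s t.

From mathcomp Require Import all_boot all_algebra fingroup perm.
From mathcomp Require Import finmap mpoly Rstruct zify.

(* Read the variable in position (r, c) of X or Y as an edge r -> c of the
   complete digraph on k vertices. Every monomial of entry (a, b) of p(X,Y) is
   then the edge multiset of a walk from a to b, so a two-letter monomial
   x_i^s x_j^t with s, t >= 2 there either consists of two loops at a, and then
   b = a and x_i, x_j are the (a, a) entries of X and Y, or of a 2-cycle u <-> v
   through a. In the second case, relabelling rows and columns of X and Y by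
   permutations of the k indices carries the term to k (k - 1) distinct
   two-letter terms with the same coefficient, more than the k available when
   k >= 3. *)

Set Implicit Arguments.
Unset Strict Implicit.
Unset Printing Implicit Defensive.

Import GRing.Theory.
Local Open Scope ring_scope.

Lemma sum_eq_pred (T : finType) (P : pred T) (x : T) :
  (\sum_(y | P y) (x == y : nat))%N = P x.
Proof.
case Px: (P x); last first.
  by rewrite big1 // => y Py; case: eqP => // exy; rewrite exy Py in Px.
rewrite (bigD1 x) //= eqxx big1 // => y /andP [_ nyx].
by rewrite eq_sym (negbTE nyx).
Qed.

Lemma card_offdiag (T : finType) :
  #|[pred x : T * T | x.1 != x.2]| = (#|T| * #|T| - #|T|)%N.
Proof.
have diagE : #|[predC [pred x : T * T | x.1 != x.2]]| = #|T|.
  rewrite -(@card_codom _ _ (fun c : T => (c, c))); last by move=> c c' [].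
  apply: eq_card => -[x y]; rewrite !inE /= negbK.
  by apply/eqP/codomP => [->|[c [-> ->]]]; [exists y|].
by rewrite -card_prod -(cardC [pred x : T * T | x.1 != x.2]) diagE addnK.
Qed.

Section PermOfPair.
Variable T : finType.
Implicit Types u v x y : T.

Definition perm2 u v x y : {perm T} := (tperm u x * tperm (tperm u x v) y)%g.

Lemma perm2_snd u v x y : perm2 u v x y v = y.
Proof. by rewrite permM tpermL. Qed.

Lemma perm2_fst u v x y : u != v -> x != y -> perm2 u v x y u = x.
Proof.
move=> nuv nxy; rewrite permM tpermL tpermD // 1?eq_sym //.
by rewrite -{1}(tpermL u x) (inj_eq perm_inj).
Qed.

End PermOfPair.

Lemma mon2E N (i j y : 'I_N) s t : mon2 i j s t y = ((i == y) * s + (j == y) * t)%N.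
Proof. by rewrite /mon2 mnmDE !mulmnE !mnm1E. Qed.

Lemma mon2_inj N (i j i' j' : 'I_N) s t : (2 <= t)%N -> (t <= s)%N -> i != j ->
  mon2 i j s t = mon2 i' j' s t -> (i = i' /\ j = j') \/ (i = j' /\ j = i').
Proof.
move=> t2 ts nij e.
have := congr1 (fun m : 'X_{1..N} => m i) e.
have := congr1 (fun m : 'X_{1..N} => m j) e.
rewrite /= !mon2E !eqxx (negbTE nij) [j == i]eq_sym (negbTE nij).
case: (i' =P j) => [?|_]; case: (j' =P j) => [?|_];
  case: (i' =P i) => [?|_]; case: (j' =P i) => [?|_] /=; try lia.
all: move=> _ _; first [by left; split; congruence | by right; split; congruence
                       | by case/eqP: nij; congruence].
Qed.

Section Grid.
Variables (k N : nat) (pos : bool * 'I_k * 'I_k -> 'I_N).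
Variable qpos : 'I_N -> bool * 'I_k * 'I_k.
Hypotheses (posK : cancel pos qpos) (qposK : cancel qpos pos).

Let X := var_mx pos false.
Let Y := var_mx pos true.

Definition src (x : 'I_N) : 'I_k := (qpos x).1.2.
Definition dst (x : 'I_N) : 'I_k := (qpos x).2.

Lemma pos_src_dst x : x = pos ((qpos x).1.1, src x, dst x).
Proof. by rewrite /src /dst -{1}(qposK x); case: (qpos x) => [[]]. Qed.

Lemma src_pos b r c : src (pos (b, r, c)) = r.
Proof. by rewrite /src posK. Qed.

Lemma dst_pos b r c : dst (pos (b, r, c)) = c.
Proof. by rewrite /dst posK. Qed.

Definition edeg (f : 'I_N -> 'I_k) (m : 'X_{1..N}) v := (\sum_(x | f x == v) m x)%N.

Lemma edegD f m1 m2 v : edeg f (m1 + m2)%MM v = (edeg f m1 v + edeg f m2 v)%N.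
Proof. by rewrite /edeg -big_split; apply: eq_bigr => x _; rewrite mnmDE. Qed.

Lemma edeg0 f v : edeg f 0%MM v = 0%N.
Proof. by rewrite /edeg big1 // => x _; rewrite mnm0E. Qed.

Lemma edegU f y v : edeg f U_(y)%MM v = (f y == v).
Proof.
rewrite /edeg; under eq_bigr do rewrite mnm1E.
exact: (sum_eq_pred (fun x => f x == v)).
Qed.

Lemma edeg_mon2 f i j s t v :
  edeg f (mon2 i j s t) v = ((f i == v) * s + (f j == v) * t)%N.
Proof.
rewrite /edeg; under eq_bigr do rewrite mon2E.
by rewrite big_split -!big_distrl /= !(sum_eq_pred (fun x => f x == v)).
Qed.

(* The variable [pos (_, r, c)] is read as an edge [r -> c] of the complete
   digraph on ['I_k], and a monomial as a multiset of edges. [walk_mnm a b m]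
   is the part of "m is the edge multiset of a walk from a to b" that survives
   multiplication: the degrees balance, some edge leaves [a], and a walk made
   of loops only never leaves [a]. *)
Definition walk_mnm (a b : 'I_k) (m : 'X_{1..N}) : Prop :=
  [/\ forall v, (edeg src m v + (b == v) = edeg dst m v + (a == v))%N,
      m = 0%MM \/ exists2 x, (0 < m x)%N & src x = a &
      (forall x, (0 < m x)%N -> src x = dst x) ->
        (forall x, (0 < m x)%N -> src x = a) /\ a = b].

Lemma walk_mnm0 a : walk_mnm a a 0%MM.
Proof. by split=> [v|| _]; [rewrite !edeg0 | left | split=> // x; rewrite mnm0E]. Qed.

Lemma walk_mnmU b r c : walk_mnm r c U_(pos (b, r, c))%MM.
Proof.
split=> [v||loops].
- by rewrite !edegU src_pos dst_pos addnC.
- by right; exists (pos (b, r, c)); rewrite ?mnm1E ?eqxx ?src_pos.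
have := loops (pos (b, r, c)); rewrite mnm1E eqxx src_pos dst_pos => /(_ isT) rc.
by split=> // x; rewrite mnm1E; case: eqP => // <- _; rewrite src_pos.
Qed.

Lemma walk_mnmD a c b m1 m2 :
  walk_mnm a c m1 -> walk_mnm c b m2 -> walk_mnm a b (m1 + m2)%MM.
Proof.
move=> [bal1 start1 loops1] [bal2 start2 loops2]; split.
- by move=> v; rewrite !edegD; move: (bal1 v) (bal2 v); lia.
- case: start1 => [m10|[x m1x srcx]]; last first.
    by right; exists x => //; rewrite mnmDE; lia.
  have ca : c = a by move: (bal1 a); rewrite m10 !edeg0 eqxx; case: eqP => //; lia.
  case: start2 => [m20|[x m2x srcx]]; first by left; rewrite m10 m20 addm0.
  by right; exists x; [rewrite mnmDE; lia | rewrite srcx].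
move=> loops.
have [src1 ac] : (forall x, (0 < m1 x)%N -> src x = a) /\ a = c.
  by apply: loops1 => x m1x; apply: loops; rewrite mnmDE; lia.
have [src2 cb] : (forall x, (0 < m2 x)%N -> src x = c) /\ c = b.
  by apply: loops2 => x m2x; apply: loops; rewrite mnmDE; lia.
split=> [x|]; last by rewrite ac cb.
rewrite mnmDE; case m1x: (0 < m1 x)%N; first by rewrite src1.
by rewrite ac => m2x; apply: src2; lia.
Qed.

Definition on_walks a b (q : cpoly N) := forall m, m \in msupp q -> walk_mnm a b m.

Lemma on_walksM a c b q1 q2 :
  on_walks a c q1 -> on_walks c b q2 -> on_walks a b (q1 * q2).
Proof.
move=> w1 w2 m /msuppM_le /allpairsP [[m1 m2] /= [m1q1 m2q2 ->]].
exact: walk_mnmD (w1 _ m1q1) (w2 _ m2q2).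
Qed.

Lemma on_walks_sum a b (I : eqType) (r : seq I) (P : pred I) (F : I -> cpoly N) :
  (forall i, P i -> on_walks a b (F i)) -> on_walks a b (\sum_(i <- r | P i) F i).
Proof.
move=> wF m /msupp_sum_le /flatten_mapP [i]; rewrite mem_filter => /andP [Pi _].
exact: wF.
Qed.

Lemma on_walksC a (c : real) : on_walks a a c%:MP.
Proof.
move=> m; rewrite msuppC; case: eqP => // _.
by rewrite inE => /eqP ->; apply: walk_mnm0.
Qed.

Lemma on_walksX b r c : on_walks r c 'X_(pos (b, r, c)).
Proof. by move=> m; rewrite msuppX inE => /eqP ->; apply: walk_mnmU. Qed.

Lemma on_walks_word w a b : on_walks a b (word_eval X Y w a b).
Proof.
elim: w a b => [|x w IH] a b /=.
  rewrite mxE; case: eqP => [<-|_]; first exact: on_walksC.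
  by move=> m; rewrite msupp0.
rewrite mxE; apply: on_walks_sum => c _; apply: on_walksM (IH c b).
by case: x; rewrite mxE; apply: on_walksX.
Qed.

Lemma on_walks_nc_eval p a b : on_walks a b (nc_eval p X Y a b).
Proof.
rewrite /nc_eval summxE; apply: on_walks_sum => w _.
by rewrite mxE; apply: on_walksM; [apply: on_walksC | apply: on_walks_word].
Qed.

Lemma walk_mnm_nc_eval p a b m :
  (nc_eval p X Y a b)@_m != 0 -> walk_mnm a b m.
Proof. by rewrite -mcoeff_msupp; apply: on_walks_nc_eval. Qed.

Lemma walk_mon2 a b i j s t : (2 <= t)%N -> (t <= s)%N ->
  walk_mnm a b (mon2 i j s t) ->
  (exists b1 b2, [/\ i = pos (b1, a, a), j = pos (b2, a, a) & b = a]) \/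
  (exists b1 b2 (u v : 'I_k),
     [/\ u != v, i = pos (b1, u, v), j = pos (b2, v, u) & a = u \/ a = v]).
Proof.
move=> t2 ts [bal start loops].
have {}bal v : ((src i == v) * s + (src j == v) * t + (b == v) =
                (dst i == v) * s + (dst j == v) * t + (a == v))%N.
  by rewrite -!edeg_mon2 bal.
have supp x : (0 < mon2 i j s t x)%N -> x = i \/ x = j.
  rewrite mon2E; case: (i =P x) => [<-|_]; first by left.
  by case: (j =P x) => [<-|_] /=; [right | lia].
have ei := pos_src_dst i; have ej := pos_src_dst j.
set r1 := src i in bal ei *; set c1 := dst i in bal ei *.
set r2 := src j in bal ej *; set c2 := dst j in bal ej *.
case: (r1 =P c1) => [loop1 | nloop1].
  have loop2 : r2 = c2.
    apply/eqP; apply: contraT => n2; move: (bal r2).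
    by rewrite eqxx loop1 [c2 == r2]eq_sym (negbTE n2); case: (c1 == r2); lia.
  have ba : b = a.
    by move: (bal a); rewrite loop1 loop2 eqxx; case: (b =P a) => //; lia.
  have [srcA _] : (forall x, (0 < mon2 i j s t x)%N -> src x = a) /\ a = b.
    by apply: loops => x /supp [->|->].
  have r1a : r1 = a by apply: srcA; rewrite mon2E eqxx; lia.
  have r2a : r2 = a by apply: srcA; rewrite mon2E eqxx; lia.
  left; exists (qpos i).1.1, (qpos j).1.1.
  by rewrite {1}ei {1}ej -loop1 -loop2 r1a r2a.
have c1r1 : (c1 == r1) = false by apply/eqP => h; apply: nloop1.
have c2r1 : c2 = r1.
  apply/eqP; apply: contraT => n; move: (bal r1).
  by rewrite eqxx c1r1 eq_sym (negbTE n); case: (r2 == r1); lia.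
have r2r1 : (r2 == r1) = false.
  by apply/eqP => h; move: (bal r1); rewrite eqxx h c2r1 eqxx c1r1; lia.
have r2c1 : r2 = c1.
  apply/eqP; apply: contraT => n; move: (bal c1).
  rewrite eqxx (negbTE n) c2r1 eq_sym c1r1; lia.
right; exists (qpos i).1.1, (qpos j).1.1, r1, c1; split=> //.
- exact/eqP.
- by rewrite {1}ej r2c1 c2r1.
case: start => [m0|[x mx <-]].
  by have := congr1 (fun m : 'X_{1..N} => m i) m0; rewrite mon2E mnm0E eqxx; lia.
by case: (supp x mx) => ->; [left | right].
Qed.

Section Relabel.
Variable pi : {perm 'I_k}.

Definition relabel_fun x := pos ((qpos x).1.1, pi (src x), pi (dst x)).

Lemma relabel_fun_inj : injective relabel_fun.
Proof.
move=> x y /(can_inj posK) [exy /perm_inj sxy /perm_inj dxy].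
by rewrite (pos_src_dst x) (pos_src_dst y) exy sxy dxy.
Qed.

Definition relabel : 'S_N := perm relabel_fun_inj.

Lemma relabel_pos b r c : relabel (pos (b, r, c)) = pos (b, pi r, pi c).
Proof. by rewrite permE /relabel_fun posK src_pos dst_pos. Qed.

Lemma msym_relabelX x : msym relabel 'X_x = 'X_(relabel x) :> cpoly N.
Proof.
rewrite msymX; congr mpolyX; apply/mnmP => y; rewrite !mnmE.
by rewrite -(inj_eq (@perm_inj _ relabel)) permKV.
Qed.

Lemma msym_relabel_word w a b :
  msym relabel (word_eval X Y w a b) = word_eval X Y w (pi a) (pi b).
Proof.
elim: w a b => [|x w IH] a b /=.
  by rewrite !mxE rmorphMn rmorph1 (inj_eq perm_inj).
rewrite !mxE (big_morph _ (@msymD _ _ relabel) (msym0 _ relabel)).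
under eq_bigr do rewrite msymM IH.
symmetry; rewrite (reindex_inj (@perm_inj _ pi)) /=; apply: eq_bigr => c _.
by case: x; rewrite !mxE msym_relabelX relabel_pos.
Qed.

Lemma msym_relabel_nc_eval p a b :
  msym relabel (nc_eval p X Y a b) = nc_eval p X Y (pi a) (pi b).
Proof.
rewrite /nc_eval !summxE (big_morph _ (@msymD _ _ relabel) (msym0 _ relabel)).
apply: eq_bigr => w _.
by rewrite !mxE !mul_mpolyC msymZ msym_relabel_word.
Qed.

Lemma mcoeff_relabel_mon2 p a b i j s t :
  (nc_eval p X Y (pi a) (pi b))@_(mon2 (relabel i) (relabel j) s t) =
  (nc_eval p X Y a b)@_(mon2 i j s t).
Proof.
rewrite -msym_relabel_nc_eval mcoeff_sym; congr mcoeff; apply/mnmP => y.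
by rewrite mnmE !mon2E !(inj_eq perm_inj).
Qed.

End Relabel.

Lemma pos_neq_flip b1 b2 r c : r != c -> pos (b1, r, c) != pos (b2, c, r).
Proof. by apply: contra => /eqP/(congr1 src); rewrite !src_pos => ->. Qed.

Definition cycle_mnm b1 b2 s t (x : 'I_k * 'I_k) :=
  mon2 (pos (b1, x.1, x.2)) (pos (b2, x.2, x.1)) s t.

Lemma cycle_mnm_inj b1 b2 s t x y : (2 <= t)%N -> (t <= s)%N -> x.1 != x.2 ->
  cycle_mnm b1 b2 s t x = cycle_mnm b1 b2 s t y -> x = y \/ x = (y.2, y.1).
Proof.
move=> t2 ts nx /(mon2_inj t2 ts (pos_neq_flip b1 b2 nx)) [[exy _]|[exy _]];
  move: (congr1 src exy) (congr1 dst exy); rewrite !src_pos !dst_pos;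
  case: x {nx exy} => [x1 x2] /= -> ->; [by left; case: y | by right].
Qed.

Lemma cycle_terms p a b u v b1 b2 s t :
  (2 <= t)%N -> (t <= s)%N -> u != v -> a = u \/ a = v ->
  exists T : seq ('I_k * 'I_k * 'X_{1..N}),
    [/\ uniq T, size T = (k * k - k)%N &
        forall z, z \in T ->
          (nc_eval p X Y z.1.1 z.1.2)@_z.2 =
            (nc_eval p X Y a b)@_(cycle_mnm b1 b2 s t (u, v)) /\
          two_letter s t z.2].
Proof.
move=> t2 ts nuv auv.
pose pi (x : 'I_k * 'I_k) := perm2 u v x.1 x.2.
pose D := [pred x : 'I_k * 'I_k | x.1 != x.2].
exists [seq ((pi x a, pi x b), cycle_mnm b1 b2 s t x) | x <- enum D]; split.
- rewrite map_inj_in_uniq ?enum_uniq // => x y; rewrite !mem_enum !inE => Dx Dy Fxy.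
  have ea := congr1 (fun z => z.1.1) Fxy; have emn := congr1 snd Fxy.
  (* [cycle_mnm] may not tell [x] from its flip, but the row [pi x a] does,
     as [a] is [u] or [v]. *)
  case: (cycle_mnm_inj t2 ts Dx emn) => // xy; rewrite {}xy /pi /= in ea.
  case: auv ea => ->; rewrite ?perm2_fst ?perm2_snd 1?(eq_sym y.2) // => eyy;
    by rewrite eyy eqxx in Dy.
- by rewrite size_map -cardE card_offdiag card_ord.
move=> z /mapP [x]; rewrite mem_enum inE => Dx -> /=; split.
  symmetry; rewrite /cycle_mnm -(mcoeff_relabel_mon2 (pi x)) !relabel_pos.
  by rewrite /pi perm2_snd perm2_fst.
exists (pos (b1, x.1, x.2)), (pos (b2, x.2, x.1)); split=> //.
exact: pos_neq_flip.
Qed.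

End Grid.

Unset Implicit Arguments.
Set Strict Implicit.

Theorem lemma2p17 (k : nat)
  (pos : bool * 'I_k * 'I_k -> 'I_(2 * k ^ 2))
  (p : ncpoly)
  (P : 'I_(k ^ 2) -> cpoly (2 * k ^ 2))
  (sigma : 'I_k * 'I_k -> 'I_(k ^ 2))
  (s t : nat) (e : real) :
  (3 <= k)%N ->
  bijective pos ->
  bijective sigma ->
  (forall a b : 'I_k,
      P (sigma (a, b)) = nc_eval p (var_mx pos false) (var_mx pos true) a b) ->
  (1 < ncdeg p)%N ->
  (2 <= t)%N ->
  (s = t \/ s = t.+1) ->
  e <> 0 ->
  (exists L : seq ('I_(k ^ 2) * 'X_{1..2 * k ^ 2}),
      [/\ uniq L, size L = k &
          forall l m, (l, m) \in L <-> ((P l)@_m = e /\ two_letter s t m)]) ->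
  forall (l : 'I_(k ^ 2)) (i j : 'I_(2 * k ^ 2)),
    i != j -> (P l)@_(mon2 i j s t) = e ->
    exists c : 'I_k,
      ((i = pos (false, c, c) /\ j = pos (true, c, c)) \/
       (i = pos (true, c, c) /\ j = pos (false, c, c))) /\
      l = sigma (c, c).
Proof.
move=> k3 [qpos posK qposK] [qs sK qsK] Pdef _ t2 st e0 [L [_ sizeL inL]].
move=> l i j nij; rewrite -(qsK l); case: (qs l) => a b; rewrite Pdef => coef.
have ts : (t <= s)%N by case: st => ->.
have walk : walk_mnm qpos a b (mon2 i j s t).
  by apply: (walk_mnm_nc_eval (p := p) posK); rewrite coef; apply/eqP.
case: (walk_mon2 qposK t2 ts walk) nij coef =>
  [[b1 [b2 [-> -> ->]]] | [b1 [b2 [u [v [nuv -> -> auv]]]]]] nij coef.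
  by exists a; split=> //; case: b1 b2 nij {coef} => [] []; rewrite ?eqxx //; auto.
have [T [uniqT sizeT inT]] := cycle_terms posK qposK p b b1 b2 t2 ts nuv auv.
have : (size [seq (sigma z.1, z.2) | z <- T] <= size L)%N.
  apply: uniq_leq_size => [|_ /mapP [[[a' b'] m] /inT [coef' two] ->]].
    by rewrite map_inj_uniq // => [[x1 m1] [x2 m2]] /= [/(can_inj sK) -> ->].
  by apply/inL; rewrite Pdef coef' /cycle_mnm coef.
by rewrite size_map sizeT sizeL; nia.
Qed.
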